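(* Let $X$ be a Banach space and let $(C_n)_{n\in\mathbb N}$ be a nested (i.e. $C_{n+1}\subset C_n$) sequence of bounded, closed, convex subsets of $X$. Suppose that $K=\bigcap_n\overline{C_n}^{w^*}$ is metrizable in the weak* topology. Then: (1) every $g\in K$ is the weak*-limit of a sequence $(c_n)$ with $c_n\in C_n$ for each $n$; (2) every sequence $(c_n)$ with $c_n\in C_n$ for each $n$ admits a subsequence that is weak*-convergent in $X^{**}$.
   Context: $X$ is regarded as a subspace of $X^{**}$ via the canonical embedding, and $\overline{A}^{w^*}$ denotes the weak*-closure in $X^{**}$ of $A\subset X$. *)

From HB Require Import structures.
From mathcomp Require Import all_boot all_order all_algebra.
From mathcomp Require Import all_classical all_reals all_analysis.
Set Implicit Arguments. Unset Strict Implicit. Unset Printing Implicit Defensive.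
Import Order.TTheory GRing.Theory Num.Theory.
Import numFieldNormedType.Exports.
Local Open Scope classical_set_scope.
Local Open Scope ring_scope.

Section Bidual.
Variables (R : realType) (X : normedModType R).

Definition dualsp : set (X -> R) :=
  [set f | (forall (a : R) (x y : X), f (a *: x + y) = a * f x + f y)
           /\ continuous f].

(* X^** : elements are functionals phi on X^* (represented as maps on all of
   X -> R, canonically normalized to 0 off X^* ), linear and bounded for the
   dual (operator) norm: |phi f| <= M * ||f||, written out as
   |phi f| <= M * c whenever |f x| <= c * ||x|| for all x. *)
Definition bidualsp : set ((X -> R) -> R) :=
  [set phi |
    (forall f, ~ dualsp f -> phi f = 0)
    /\ (forall (a : R) f g, dualsp f -> dualsp g ->
          phi (fun x => a * f x + g x) = a * phi f + phi g)
    /\ (exists M : R, forall f (c : R), dualsp f ->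
          (forall x, `|f x| <= c * `|x|) -> `|phi f| <= M * c)].

Definition canon (x : X) : (X -> R) -> R :=
  fun f => if pselect (dualsp f) then f x else 0.

Definition wstar_closure (A : set X) : set ((X -> R) -> R) :=
  [set g | bidualsp g /\
    forall (s : seq (X -> R)) (e : R), (forall f, f \in s -> dualsp f) ->
      0 < e -> exists2 a, A a & forall f, f \in s -> `|canon a f - g f| < e].

Definition wstar_metrizable (K : set ((X -> R) -> R)) : Prop :=
  exists d : ((X -> R) -> R) -> ((X -> R) -> R) -> R,
    [/\ (forall g h, K g -> K h -> 0 <= d g h),
        (forall g h, K g -> K h -> (d g h = 0 <-> g = h)),
        (forall g h, K g -> K h -> d g h = d h g) &
        (forall g h k, K g -> K h -> K k -> d g k <= d g h + d h k)] /\
    ((* every metric ball contains a relative weak* neighbourhood *)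
        (forall g (e : R), K g -> 0 < e ->
           exists (s : seq (X -> R)) (dl : R),
             [/\ (forall f, f \in s -> dualsp f), 0 < dl &
                 forall h, K h -> (forall f, f \in s -> `|h f - g f| < dl) ->
                   d g h < e]) /\
        (* every relative weak* neighbourhood contains a metric ball *)
        (forall g (s : seq (X -> R)) (dl : R), K g ->
           (forall f, f \in s -> dualsp f) -> 0 < dl ->
           exists2 e : R, 0 < e &
             forall h, K h -> d g h < e -> forall f, f \in s -> `|h f - g f| < dl)).

Definition bounded_sub (A : set X) : Prop :=
  exists M : R, forall x, A x -> `|x| <= M.

Definition convex_sub (A : set X) : Prop :=
  forall x y (t : R), A x -> A y -> 0 <= t <= 1 -> A (t *: x + (1 - t) *: y).

End Bidual.

From Pilot Require Import Defs.
From HB Require Import structures.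
From mathcomp Require Import all_boot all_order all_algebra.
From mathcomp Require Import all_classical all_reals all_analysis.
From mathcomp Require Import ring.
Set Implicit Arguments. Unset Strict Implicit. Unset Printing Implicit Defensive.
Import Order.TTheory GRing.Theory Num.Theory.
Import numFieldNormedType.Exports.
Local Open Scope classical_set_scope.
Local Open Scope ring_scope.

(* For a bounded sequence (y_n) in X and an ultrafilter U on the indices,
   f |-> lim_U f(y_n) is an element of X**, the weak* limit of (y_n) along U;
   when U refines the cofinite filter and y_n \in C_n, it lies in K.
   Weak* metrizability of K at g gives countably many functionals S such that
   the only point of K agreeing with g on S is g itself. So if f(y_n) -> g(f)
   for every f in S, every ultrafilter limit of (y_n) is g, and therefore
   f(y_n) -> g(f) for every f in X*. For (1), pick c_n \in C_n which is
   1/(n+1)-close to g on the first n blocks of S; for (2), let g be one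
   ultrafilter limit of (c_n) and extract a subsequence close to g in the same
   way. *)

Lemma cvg_ultra_refine (T : Type) (Y : topologicalType) (F : set_system T)
    (u : T -> Y) (l : Y) :
  Filter F -> (forall G, UltraFilter G -> F `<=` G -> u @ G --> l) ->
  u @ F --> l.
Proof.
move=> FF uGl V Vl; apply: contrapT => nFV.
(* The filter generated by F and the complement of u^-1 V; it is proper
   precisely because F does not contain u^-1 V. *)
pose G0 := [set P | F (P `|` u @^-1` V)].
have G0proper : ProperFilter G0.
  apply: Build_ProperFilter_ex.
    move=> P G0P; apply: contrapT => P0; apply: nFV.
    by apply: (@filterS _ F _ _ _ _ G0P) => t [Pt|//]; case: P0; exists t.
  split; first by rewrite /G0 /= setTU; exact: filterT.
  - move=> P Q FP FQ; apply: (@filterS _ F _ _ _ _ (@filterI _ F _ _ _ FP FQ)).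
    by move=> t [[?|?] [?|?]]; [left|right|right|right].
  - by move=> P Q PQ FP; apply: (@filterS _ F _ _ _ _ FP) => t [/PQ|]; [left|right].
have [G [UG G0G]] := ultraFilterLemma G0proper.
have FG : F `<=` G by move=> P FP; apply: G0G; apply: filterS FP => t; left.
have GnV : G (~` (u @^-1` V)) by apply: G0G; rewrite /G0 /= setvU; exact: filterT.
have GV : G (u @^-1` V) := uGl G UG FG V Vl.
by have [t [? ?]] := filter_ex (filterI GV GnV).
Qed.

Lemma ultra_bounded_cvg (R : realType) (T : Type) (U : set_system T)
    (u : T -> R) (B : R) :
  UltraFilter U -> (forall t, `|u t| <= B) -> cvg (u @ U).
Proof.
move=> UU uB.
have UB : U (fun t => u t \in `[-B, B]).
  by apply: filterE => t; rewrite in_itv /= -ler_norml.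
have [p [_ clp]] := segment_compact (F := u @ U) _ UB.
apply/cvg_ex; exists p => V Vp.
have [//|UnV] := in_ultra_setVsetC (u @^-1` V) UU.
by have [t [? ?]] := clp (~` V) V UnV Vp.
Qed.

Lemma cvg_dist_lt_inv_succ (R : realType) (u : nat -> R) (l : R) (j : nat) :
  (forall n, (j <= n)%N -> `|u n - l| < n.+1%:R^-1) -> u @ \oo --> l.
Proof.
move=> ul; apply/cvgrPdist_lt => e e0.
apply: filterS (filterI (nbhs_infty_ge j) (near_infty_natSinv_lt (PosNum e0))).
by move=> n [/= jn ne]; rewrite distrC; exact: lt_trans (ul n jn) ne.
Qed.

Lemma increasing_select (P : nat -> set nat) :
  (forall m k, exists2 n, (k <= n)%N & P m n) ->
  exists sigma : nat -> nat,
    (forall n, (sigma n < sigma n.+1)%N) /\ forall m, P m (sigma m).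
Proof.
move=> Pinf.
have /choice [tau tauP] : forall mk : nat * nat, exists n, (mk.2 <= n)%N /\ P mk.1 n.
  by case=> m k; have [n kn Pn] := Pinf m k; exists n.
pose fix sigma m := if m is m'.+1 then tau (m, (sigma m').+1) else tau (0, 0)%N.
exists sigma; split; first by move=> n; exact: (tauP (n.+1, _)).1.
by case=> [|m]; exact: (tauP (_, _)).2.
Qed.

Section Wstar.
Variables (R : realType) (X : normedModType R).

Lemma dualsp_bounded (f : X -> R) :
  dualsp f -> exists2 k : R, 0 <= k & forall x, `|f x| <= k * `|x|.
Proof.
move=> [linf cf].
pose lf : {linear X -> R^o} := HB.pack f (GRing.isLinear.Build _ _ _ _ f linf).
have /linear_boundedP/pinfty_ex_gt0 [k k0 fk] :=
  @continuous_linear_bounded _ _ _ 0 lf (cf 0).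
by exists k; [exact: ltW|].
Qed.

Lemma canonE (x : X) (f : X -> R) : dualsp f -> Defs.canon x f = f x.
Proof. by rewrite /Defs.canon; case: pselect. Qed.

Lemma dualsp_comb (a : R) (f g : X -> R) :
  dualsp f -> dualsp g -> dualsp (fun x => a * f x + g x).
Proof.
move=> [lf cf] [lg cg]; split; first by move=> b x y; rewrite lf lg; ring.
by move=> x; apply: cvgD; [apply: cvgM; [exact: cvg_cst|exact: cf]|exact: cg].
Qed.

(* Off X* the value is 0, matching the normalisation in [bidualsp]. *)
Definition wstar_ulim {I : Type} (U : set_system I) (y : I -> X) :
    (X -> R) -> R :=
  fun f => if pselect (dualsp f) then lim ((fun i => f (y i)) @ U) else 0.

Lemma wstar_ulimE {I : Type} (U : set_system I) (y : I -> X) (f : X -> R) :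
  dualsp f -> wstar_ulim U y f = lim ((fun i => f (y i)) @ U).
Proof. by rewrite /wstar_ulim; case: pselect. Qed.

Section UltrafilterLimit.
Variables (I : Type) (U : set_system I) (y : I -> X) (B : R).
Hypotheses (UU : UltraFilter U) (yB : forall i, `|y i| <= B).

Lemma wstar_ulim_cvg (f : X -> R) :
  dualsp f -> (fun i => f (y i)) @ U --> wstar_ulim U y f.
Proof.
move=> df; rewrite wstar_ulimE //.
have [k k0 fk] := dualsp_bounded df.
apply: (@ultra_bounded_cvg R I U _ (k * B) UU) => i.
by apply: le_trans (fk _) _; rewrite ler_wpM2l.
Qed.

Lemma wstar_ulim_bidual : bidualsp (wstar_ulim U y).
Proof.
split; first by move=> f nf; rewrite /wstar_ulim; case: pselect.
split.
  move=> a f g df dg; rewrite [LHS]wstar_ulimE; last exact: dualsp_comb.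
  apply: (cvg_lim (@norm_hausdorff _ _)).
  exact: cvgD (cvgM (cvg_cst a) (wstar_ulim_cvg df)) (wstar_ulim_cvg dg).
have ny_cvg : cvg ((fun i => `|y i|) @ U).
  by apply: (@ultra_bounded_cvg R I U _ B UU) => i; rewrite normr_id.
exists (lim ((fun i => `|y i|) @ U)) => f c df fc; rewrite mulrC -subr_ge0.
apply: (cvgr_to_ge (F := U) (f := fun i => c * `|y i| - `|f (y i)|)).
  exact: cvgB (cvgM (cvg_cst c) ny_cvg) (cvg_norm (wstar_ulim_cvg df)).
by apply: filterE => i; rewrite subr_ge0.
Qed.

Lemma wstar_ulim_near (s : seq (X -> R)) (e : R) :
  (forall f, f \in s -> dualsp f) -> 0 < e ->
  U [set i | forall f, f \in s -> `|f (y i) - wstar_ulim U y f| < e].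
Proof.
move=> sd e0; elim: s sd => [|f s IH] sd.
  by apply: filterE => i f; rewrite in_nil.
have df : dualsp f by apply: sd; rewrite mem_head.
have Uf : U [set i | `|wstar_ulim U y f - f (y i)| < e].
  exact: (cvgrPdist_lt (F := U) _ _).1 (wstar_ulim_cvg df) e e0.
have Us := IH (fun g gs => sd g (mem_behead (s := f :: s) gs)).
apply: filterS (filterI Uf Us) => i [/= fi si] g.
by rewrite in_cons => /orP [/eqP ->|/si //]; rewrite distrC.
Qed.

Lemma wstar_ulim_closure (A : set X) :
  U (y @^-1` A) -> wstar_closure A (wstar_ulim U y).
Proof.
move=> UA; split; first exact: wstar_ulim_bidual.
move=> s e sd e0.
have [i [yi Ai]] := filter_ex (filterI (wstar_ulim_near sd e0) UA).
by exists (y i) => // f fs; rewrite canonE; [exact: yi|exact: sd].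
Qed.

End UltrafilterLimit.

Definition wstar_separating (K : set ((X -> R) -> R)) (g : (X -> R) -> R)
    (S : nat -> seq (X -> R)) :=
  (forall j f, f \in S j -> dualsp f) /\
  (forall h, K h -> (forall j f, f \in S j -> h f = g f) -> h = g).

Lemma wstar_metrizable_separating (K : set ((X -> R) -> R)) g :
  wstar_metrizable K -> K g -> exists S, wstar_separating K g S.
Proof.
move=> [d [[d0 dE _ _] [ballN _]]] Kg.
have /choice [S SP] := fun j : nat =>
  ballN g j.+1%:R^-1 Kg ltac:(by rewrite invr_gt0).
exists S; split; first by move=> j f; have [dl [+ _ _]] := SP j; exact.
move=> h Kh hg; apply/esym/(dE g h Kg Kh).
have dlt j : d g h < j.+1%:R^-1.
  have [dl [_ dl0 ball]] := SP j.
  by apply: ball => // f fs; rewrite (hg j) // subrr normr0.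
apply/eqP; rewrite eq_le d0 // andbT leNgt; apply/negP => dgh.
have [j jlt] := filter_ex (near_infty_natSinv_lt (PosNum dgh)).
by have := lt_trans (dlt j) jlt; rewrite ltxx.
Qed.

Definition blocks (S : nat -> seq (X -> R)) (m : nat) : seq (X -> R) :=
  flatten [seq S i | i <- iota 0 m.+1].

Lemma mem_blocks S m j f : (j <= m)%N -> f \in S j -> f \in blocks S m.
Proof.
move=> jm fs; apply/flattenP; exists (S j) => //.
by apply/mapP; exists j => //; rewrite mem_iota add0n ltnS jm.
Qed.

Lemma blocks_dualsp S m :
  (forall j f, f \in S j -> dualsp f) -> forall f, f \in blocks S m -> dualsp f.
Proof. by move=> Sd f /flattenP [s /mapP [j _ ->]]; exact: Sd. Qed.

Section Nested.
Variables (C : nat -> set X) (B : R).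
Hypotheses (nestedC : forall n, C n.+1 `<=` C n)
  (C0B : forall x, C 0%N x -> `|x| <= B).

Local Notation K := (\bigcap_n wstar_closure (C n)).

Lemma nested_subset m n : (m <= n)%N -> C n `<=` C m.
Proof.
elim: n => [|n IH]; first by rewrite leqn0 => /eqP ->.
rewrite leq_eqVlt => /orP [/eqP -> //|]; rewrite ltnS => mn x Cx.
exact/IH/nestedC.
Qed.

Lemma nested_bounded n x : C n x -> `|x| <= B.
Proof. by move=> /(nested_subset (leq0n n)); exact: C0B. Qed.

Lemma wstar_ulim_nested (U : set_system nat) (y : nat -> X) :
  UltraFilter U -> \oo `<=` U -> (forall n, C n (y n)) -> K (wstar_ulim U y).
Proof.
move=> UU oU yC m _.
apply: (wstar_ulim_closure (B := B)) => [n|]; first exact: nested_bounded (yC n).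
apply: oU; apply: filterS (nbhs_infty_ge m) => n mn.
exact: nested_subset mn _ (yC n).
Qed.

Lemma separating_cvg (g : (X -> R) -> R) S (y : nat -> X) :
  wstar_separating K g S -> (forall n, C n (y n)) ->
  (forall j f, f \in S j -> (fun n => f (y n)) @ \oo --> g f) ->
  forall f, dualsp f -> (fun n => f (y n)) @ \oo --> g f.
Proof.
move=> [Sd Ssep] yC Scvg f df; apply: cvg_ultra_refine => U UU oU.
have yB n : `|y n| <= B by exact: nested_bounded (yC n).
suff gE : wstar_ulim U y = g.
  by rewrite -gE; exact: (@wstar_ulim_cvg nat U y B UU yB f df).
apply: Ssep; first exact: wstar_ulim_nested.
move=> j h hs.
apply: (cvg_unique (@norm_hausdorff _ _) (F := (fun n => h (y n)) @ U)).
  exact: (@wstar_ulim_cvg nat U y B UU yB h (Sd j h hs)).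
by move=> V Vg; apply: oU; exact: Scvg j h hs V Vg.
Qed.

Lemma wstar_approx_seq (g : (X -> R) -> R) :
  wstar_metrizable K -> K g ->
  exists c : nat -> X, (forall n, C n (c n)) /\
    forall f, dualsp f -> (fun n => f (c n)) @ \oo --> g f.
Proof.
move=> metrK Kg; have [S Ssep] := wstar_metrizable_separating metrK Kg.
have close m : exists a, C m a /\ forall f, f \in blocks S m ->
    `|f a - g f| < m.+1%:R^-1.
  have [_ gC] := Kg m I.
  have m0 : 0 < m.+1%:R^-1 :> R by rewrite invr_gt0.
  have [a Ca aP] := gC _ _ (blocks_dualsp Ssep.1 (m := m)) m0.
  exists a; split => // f fs; rewrite -canonE; first exact: aP.
  exact: blocks_dualsp Ssep.1 _ fs.
have [c cP] := choice close.
exists c; split; first by move=> n; case: (cP n).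
apply: (separating_cvg Ssep (fun n => (cP n).1)) => j f fs.
apply: (cvg_dist_lt_inv_succ (j := j)) => n jn.
exact: (cP n).2 _ (mem_blocks jn fs).
Qed.

Lemma wstar_cvg_subseq (c : nat -> X) :
  wstar_metrizable K -> (forall n, C n (c n)) ->
  exists sigma : nat -> nat, (forall n, (sigma n < sigma n.+1)%N) /\
    exists2 psi, bidualsp psi &
      forall f, dualsp f -> (fun n => f (c (sigma n))) @ \oo --> psi f.
Proof.
move=> metrK cC.
have [U [UU oU]] := ultraFilterLemma eventually_filter.
have cB n : `|c n| <= B by exact: nested_bounded (cC n).
pose g := wstar_ulim U c.
have [S Ssep] := wstar_metrizable_separating metrK (wstar_ulim_nested UU oU cC).
pose P m n := forall f, f \in blocks S m -> `|f (c n) - g f| < m.+1%:R^-1.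
have Pinf m k : exists2 n, (k <= n)%N & P m n.
  have m0 : 0 < m.+1%:R^-1 :> R by rewrite invr_gt0.
  have UP : U (P m) := wstar_ulim_near UU cB (blocks_dualsp Ssep.1 (m := m)) m0.
  by have [n [kn Pn]] := filter_ex (filterI (oU _ (nbhs_infty_ge k)) UP); exists n.
have [sigma [sigmaS sigmaP]] := increasing_select Pinf.
have sigma_ge n : (n <= sigma n)%N.
  by elim: n => // n IH; exact: leq_ltn_trans IH (sigmaS n).
exists sigma; split => //; exists g; first exact: wstar_ulim_bidual cB.
apply: (separating_cvg Ssep) => [n|j f fs].
  exact: nested_subset (sigma_ge n) _ (cC _).
apply: (cvg_dist_lt_inv_succ (j := j)) => n jn.
exact: sigmaP n f (mem_blocks jn fs).
Qed.

End Nested.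
End Wstar.

Theorem lemma1 (R : realType) (X : completeNormedModType R)
  (C : nat -> set X) :
  (forall n, C n.+1 `<=` C n) ->
  (forall n, bounded_sub (C n)) ->
  (forall n, closed (C n)) ->
  (forall n, convex_sub (C n)) ->
  wstar_metrizable (\bigcap_n wstar_closure (C n)) ->
  (forall g, (\bigcap_n wstar_closure (C n)) g ->
     exists c : nat -> X, (forall n, C n (c n)) /\
       forall f, dualsp f -> (fun n => f (c n)) @ \oo --> g f)
  /\
  (forall c : nat -> X, (forall n, C n (c n)) ->
     exists sigma : nat -> nat, (forall n, (sigma n < sigma n.+1)%N) /\
       exists2 psi, bidualsp psi &
         forall f, dualsp f -> (fun n => f (c (sigma n))) @ \oo --> psi f).
Proof.
move=> nestedC boundedC _ _ metrK; have [B C0B] := boundedC 0%N.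
split=> [g Kg|c cC].
- exact: wstar_approx_seq nestedC C0B g metrK Kg.
- exact: wstar_cvg_subseq nestedC C0B c metrK cC.
Qed.
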